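(* Consider the control-affine system $\dot x = f(x)+g(x)u$ with $x\in\mathbb R^n$, $f:\mathbb R^n\to\mathbb R^n$, $g:\mathbb R^n\to\mathbb R^{n\times m}$ continuous, and input constraint set $\mathcal U = \{v\in\mathbb R^m \mid A_u v\leq b_u\}$. Let $h_G:\mathbb R^n\to\mathbb R$ be continuously differentiable and $S_G = \{x\mid h_G(x)\leq 0\}$. Fix $\mu>1$, $\gamma_1 = 1+\frac1\mu$, $\gamma_2 = 1-\frac1\mu$, $\alpha_1,\alpha_2>0$, a diagonal matrix $H = \mathrm{diag}\{p_{u_1},\dots,p_{u_m},p_1\}$ with positive entries, and $F = [\mathbf 0_m^T\ \ q_1]^T$ with $q_1>0$. For each $x$, consider the quadratic program \[ \min_{v\in\mathbb R^m,\ \delta_1\in\mathbb R}\ \tfrac12 z^T H z + F^T z,\qquad z = [v^T\ \ \delta_1]^T, \] subject to \[ A_u v\leq b_u,\qquad L_fh_G(x) + L_gh_G(x)v \leq \delta_1 h_G(x) - \alpha_1\max\{0,h_G(x)\}^{\gamma_1} - \alpha_2\max\{0,h_G(x)\}^{\gamma_2}. \] If $\mathcal U$ is non-empty, then this quadratic program is feasible (its constraint set is non-empty) for all $x\notin S_G$.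
   Context: $L_fh_G(x) = \frac{\partial h_G}{\partial x}(x) f(x)$ and $L_gh_G(x) = \frac{\partial h_G}{\partial x}(x) g(x)$ denote Lie derivatives; $\mathbf 0_m$ is the zero vector in $\mathbb R^m$. *)

From HB Require Import structures.
From mathcomp Require Import all_boot all_order all_algebra.
From mathcomp Require Import all_classical all_reals all_analysis.
Set Implicit Arguments. Unset Strict Implicit. Unset Printing Implicit Defensive.
Import Order.TTheory GRing.Theory Num.Theory.
Import numFieldNormedType.Exports.
Local Open Scope ring_scope.

Definition C1_fun (R : realType) (n : nat) (h : 'cV[R]_n -> R) : Prop :=
  (forall x, differentiable h x) /\
  (forall i : 'I_n, continuous (fun x => 'd h x (delta_mx i 0 : 'cV[R]_n))).

Definition Lf (R : realType) (n : nat) (h : 'cV[R]_n -> R)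
  (f : 'cV[R]_n -> 'cV[R]_n) (x : 'cV[R]_n) : R := 'd h x (f x).
Definition Lg (R : realType) (n m : nat) (h : 'cV[R]_n -> R)
  (g : 'cV[R]_n -> 'M[R]_(n, m)) (x : 'cV[R]_n) : 'rV[R]_m :=
  \row_(j < m) 'd h x (col j (g x)).

Definition mx_le (R : realType) (k : nat) (a b : 'cV[R]_k) : Prop :=
  forall i, a i 0 <= b i 0.

Definition Uset (R : realType) (k m : nat) (Au : 'M[R]_(k, m)) (bu : 'cV[R]_k)
  : set 'cV[R]_m := [set v | mx_le (Au *m v) bu].

Definition QP_constraints (R : realType) (n m k : nat)
  (f : 'cV[R]_n -> 'cV[R]_n) (g : 'cV[R]_n -> 'M[R]_(n, m))
  (Au : 'M[R]_(k, m)) (bu : 'cV[R]_k) (hG : 'cV[R]_n -> R)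
  (alpha1 alpha2 gamma1 gamma2 : R) (x : 'cV[R]_n) : set 'cV[R]_(m + 1) :=
  [set z | let v := usubmx z in let delta1 := dsubmx z 0 0 in
     mx_le (Au *m v) bu /\
     Lf hG f x + (Lg hG g x *m v) 0 0 <=
       delta1 * hG x - alpha1 * powR (Num.max 0 (hG x)) gamma1
                     - alpha2 * powR (Num.max 0 (hG x)) gamma2].

Definition QP_cost (R : realType) (m : nat) (H : 'M[R]_(m + 1))
  (F : 'cV[R]_(m + 1)) (z : 'cV[R]_(m + 1)) : R :=
  2^-1 * (z^T *m H *m z) 0 0 + (F^T *m z) 0 0.

From HB Require Import structures.
From mathcomp Require Import all_boot all_order all_algebra.
From mathcomp Require Import all_classical all_reals all_analysis.
Import Order.TTheory GRing.Theory Num.Theory.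
Import numFieldNormedType.Exports.
Local Open Scope ring_scope.
Local Open Scope classical_set_scope.

(* Outside S_G we have h_G(x) > 0, so the relaxation variable delta1 enters the
   barrier constraint with a positive coefficient.  Any admissible input v
   therefore extends to a feasible point by taking delta1 large enough, namely
   delta1 h_G(x) = L_fh_G(x) + L_gh_G(x) v + alpha1 h^gamma1 + alpha2 h^gamma2. *)

Section QPFeasibility.

Variables (R : realType) (n m k : nat).
Variables (f : 'cV[R]_n -> 'cV[R]_n) (g : 'cV[R]_n -> 'M[R]_(n, m)).
Variables (Au : 'M[R]_(k, m)) (bu : 'cV[R]_k) (hG : 'cV[R]_n -> R).
Variables (alpha1 alpha2 gamma1 gamma2 : R).

Local Notation QP := (QP_constraints f g Au bu hG alpha1 alpha2 gamma1 gamma2).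

Lemma QP_constraints_col_mx x v delta1 :
  QP x (col_mx v (const_mx delta1)) <->
  Uset Au bu v /\
  Lf hG f x + (Lg hG g x *m v) 0 0 <=
    delta1 * hG x - alpha1 * powR (Num.max 0 (hG x)) gamma1
                  - alpha2 * powR (Num.max 0 (hG x)) gamma2.
Proof. by rewrite /QP_constraints /= col_mxKu col_mxKd [const_mx _ _ _]mxE. Qed.

Lemma QP_constraints_neq0 x : 0 < hG x -> Uset Au bu !=set0 -> QP x !=set0.
Proof.
move=> hx_gt0 [v Uv].
pose barrier := alpha1 * powR (Num.max 0 (hG x)) gamma1
              + alpha2 * powR (Num.max 0 (hG x)) gamma2.
exists (col_mx v (const_mx ((Lf hG f x + (Lg hG g x *m v) 0 0 + barrier) / hG x))).
apply/QP_constraints_col_mx; split => //.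
by rewrite divfK ?gt_eqF // /barrier addrA (addrAC _ (alpha2 * _)) !addrK.
Qed.

End QPFeasibility.

Theorem lemma3 (R : realType) (n m k : nat)
  (f : 'cV[R]_n -> 'cV[R]_n) (g : 'cV[R]_n -> 'M[R]_(n, m))
  (hf : continuous f) (hg : continuous g)
  (Au : 'M[R]_(k, m)) (bu : 'cV[R]_k)
  (hG : 'cV[R]_n -> R) (hC1 : C1_fun hG)
  (mu : R) (hmu : 1 < mu)
  (alpha1 alpha2 : R) (ha1 : 0 < alpha1) (ha2 : 0 < alpha2)
  (pu : 'rV[R]_m) (p1 : R) (hpu : forall j, 0 < pu 0 j) (hp1 : 0 < p1)
  (q1 : R) (hq1 : 0 < q1) :
  let gamma1 := 1 + mu^-1 in
  let gamma2 := 1 - mu^-1 in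
  let H : 'M[R]_(m + 1) := diag_mx (row_mx pu (const_mx p1)) in
  let F : 'cV[R]_(m + 1) := col_mx 0 (const_mx q1) in
  Uset Au bu !=set0 ->
  forall x : 'cV[R]_n, ~ (hG x <= 0) ->
    QP_constraints f g Au bu hG alpha1 alpha2 gamma1 gamma2 x !=set0.
Proof.
move=> gamma1 gamma2 H F U_neq0 x hx_notle0.
apply: QP_constraints_neq0 U_neq0.
by rewrite ltNge; apply/negP.
Qed.
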